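(* Let $G=A(n,\theta)$ with $n\ge3$ odd. For each $x\in G\setminus Z(G)$, the subgroup $[x,G]=\langle x^{-1}g^{-1}xg : g\in G\rangle$ is a maximal subgroup of $Z(G)$ (i.e. of index $2$). Every maximal subgroup of $Z(G)$ is of the form $[x,G]$ for some $x\in G\setminus Z(G)$, and for $x,x'\in G\setminus Z(G)$ we have $[x,G]=[x',G]$ if and only if $xZ(G)=x'Z(G)$.
   Context: Let $n=2m+1$ be odd, $\mathbb{F}_{2^n}$ the field with $2^n$ elements, $\theta$ a generator of $\mathrm{Gal}(\mathbb{F}_{2^n}/\mathbb{F}_2)$, $a^\theta$ the image of $a$ under $\theta$. $G=A(n,\theta)$ is the group of matrices $\begin{bmatrix}1&a&b\\0&1&a^\theta\\0&0&1\end{bmatrix}$, $a,b\in\mathbb{F}_{2^n}$, denoted $(a,b)$, with $(a,b)(c,d)=(a+c,\,b+d+ac^\theta)$. $Z(G)$ is the center of $G$ (an elementary abelian $2$-group of order $2^n$). *)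

From HB Require Import structures.
From mathcomp Require Import all_boot all_order all_algebra all_fingroup all_solvable.
From mathcomp Require Import ring.
Set Implicit Arguments. Unset Strict Implicit. Unset Printing Implicit Defensive.
Import GRing.Theory.

(* theta generates Gal(F/F_2): every field automorphism of F (= every ring
   endomorphism of the finite field F, all of which fix the prime field F_2)
   is a power of theta. *)
Definition gal_generator (F : finFieldType) (th : {rmorphism F -> F}) : Prop :=
  forall sigma : {rmorphism F -> F}, exists k : nat, forall x, sigma x = iter k th x.

(* The element (a,b) stands for the matrix [[1,a,b],[0,1,a^th],[0,0,1]];
   the type depends on th so that the group law can. *)
Definition Agrp (F : finFieldType) (th : {rmorphism F -> F}) : Type := (F * F)%type.

Section AGroup.
Variables (F : finFieldType) (th : {rmorphism F -> F}).
Local Open Scope ring_scope.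

Local Notation Agrp := (Agrp th).
HB.instance Definition _ := Finite.on Agrp.

Definition Amul (x y : Agrp) : Agrp := (x.1 + y.1, x.2 + y.2 + x.1 * th y.1).
Definition Aone : Agrp := (0, 0).
Definition Ainv (x : Agrp) : Agrp := (- x.1, - x.2 + x.1 * th x.1).

Lemma AmulA : associative Amul.
Proof.
move=> [a b] [c d] [e f]; rewrite /Amul /=; congr (_, _); first by rewrite addrA.
by rewrite rmorphD /= mulrDl mulrDr; ring.
Qed.

Lemma Amul1 : left_id Aone Amul.
Proof. by move=> [a b]; rewrite /Amul /= !add0r mul0r addr0. Qed.

Lemma AmulV : left_inverse Aone Ainv Amul.
Proof.
move=> [a b]; rewrite /Amul /Ainv /=; congr (_, _); first by rewrite addNr.
by rewrite mulNr; ring.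
Qed.

HB.instance Definition _ := Finite_isGroup.Build Agrp AmulA Amul1 AmulV.

End AGroup.

Definition commx (F : finFieldType) (th : {rmorphism F -> F}) (x : Agrp th)
  : {set Agrp th} :=
  <<[set [~ x, g] | g in [set: Agrp th]]>>%g.

From HB Require Import structures.
From mathcomp Require Import all_boot all_order all_algebra all_fingroup all_solvable.
From mathcomp Require Import all_field all_character ring.
Set Implicit Arguments. Unset Strict Implicit. Unset Printing Implicit Defensive.
Import GRing.Theory.

(* For x = (a, b) and g = (c, d) the commutator [x, g] is the central element
   (0, a c^th - c a^th). Hence Z(G) = {(0, b)}, and for a <> 0 the map
   g |-> [x, g] is a homomorphism G -> Z(G) whose kernel {(c, d) | c in {0, a}}
   has order 2|F| (the fixed field of th is F_2), so [x, G] has index 2 in Z(G).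
   Substituting c = a t gives [x, G] = a a^th . R, where R is the image of
   t |-> t^th - t. The only scalar stabilizing the index-2 subgroup R is 1, so
   [x, G] determines a a^th, which determines a because th^2 still generates
   Gal(F/F_2) when n is odd. This yields |F| - 1 distinct maximal subgroups
   [x, G], while an abelian group Z has at most |Z| - 1 maximal subgroups (the
   kernels of its nontrivial linear characters), so there are no others. *)

Lemma expn2_odd_mod3 n : odd n -> 2 ^ n = 2 %[mod 3].
Proof.
move=> odd_n; rewrite -[n in 2 ^ n]odd_double_half odd_n add1n.
elim: n./2 => [|m IHm] //.
by rewrite doubleS !expnS mulnA -modnMm -expnS IHm.
Qed.

Section FinFieldScaling.
Variable F : finFieldType.
Local Open Scope ring_scope.

Lemma cube_root1_eq1 (u : F) : #|F| = 2 %[mod 3] -> u ^+ 3 = 1 -> u = 1.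
Proof.
move=> cardF u3.
have u0 : u != 0 by apply: contra_eq_neq u3 => ->; rewrite expr0n eq_sym oner_neq0.
have u2 : u ^+ 2 = u by rewrite -[RHS](expf_card u) -(expr_mod #|F| u3) cardF.
by apply: (mulIf u0); rewrite mul1r -expr2 u2.
Qed.

Lemma invf_expr (u : F) : u != 0 -> u^-1 = u ^+ #|F|.-2.
Proof.
move=> u0; have F1 := finNzRing_gt1 F.
have u1 : u ^+ #|F|.-1 = 1.
  by apply: (mulIf u0); rewrite mul1r -exprSr (ltn_predK F1) expf_card.
by apply: (mulfI u0); rewrite mulfV // -exprS prednK // -ltnS (ltn_predK F1).
Qed.

Section ScaleClosed.
Variables (P : {set F}) (u : F).
Hypothesis uP : {in P, forall p, u * p \in P}.

Lemma scale_closedX m : {in P, forall p, u ^+ m * p \in P}.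
Proof.
elim: m => [|m IHm] p Pp; first by rewrite expr0 mul1r.
by rewrite exprS -mulrA; apply/uP/IHm.
Qed.

Lemma scale_closedV : u != 0 -> {in P, forall p, u^-1 * p \in P}.
Proof. by move=> u0; rewrite invf_expr //; apply: scale_closedX. Qed.

End ScaleClosed.

(* P is an additive subgroup of index 2: closed under subtraction, proper, and
   containing the difference of any two elements outside it. *)
Lemma scale_stable_index2 (P : {set F}) (l : F) :
    {in P &, forall p q, p - q \in P} -> {in ~: P &, forall y z, z - y \in P} ->
    (exists y, y \notin P) ->
  l != 0 -> {in P, forall p, l * p \in P} -> l = 1.
Proof.
move=> subP complP [y Py] l0 lP; apply/eqP; apply: contraT => l1.
have mu0 : l - 1 != 0 by rewrite subr_eq0.
have muP : {in P, forall p, (l - 1) * p \in P}.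
  by move=> p Pp; rewrite mulrBl mul1r; apply: subP => //; apply: lP.
have lPy : l * y \notin P by apply: contra Py => /(scale_closedV lP l0); rewrite mulKf.
have : (l - 1) * y \in P by rewrite mulrBl mul1r; apply: complP; rewrite inE.
by move/(scale_closedV muP mu0); rewrite mulKf // (negbTE Py).
Qed.

End FinFieldScaling.

Section FrobeniusPower.
Variables (F : finFieldType) (th : {rmorphism F -> F}) (k : nat).
Local Open Scope ring_scope.
Hypothesis sqr_iter : forall t : F, t ^+ 2 = iter k th t.

Lemma fixed_th_01 t : th t = t -> t = 0 \/ t = 1.
Proof.
move=> tht; have iter_t : iter k th t = t by elim: k => //= j ->.
have : t * (t - 1) == 0 by rewrite mulrBr mulr1 -expr2 sqr_iter iter_t subrr.
by rewrite mulf_eq0 subr_eq0 => /orP[] /eqP; [left | right].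
Qed.

Hypothesis cube_root1 : forall u : F, u ^+ 3 = 1 -> u = 1.

Lemma fixed_th2 u : th (th u) = u -> th u = u.
Proof.
move=> th2u; have [->|u0] := eqVneq u 0; first exact: rmorph0.
suff -> : u = 1 by rewrite rmorph1.
have : u ^+ 2 = u \/ u ^+ 2 = th u.
  rewrite sqr_iter; elim: k => [|j IHj] /=; first by left.
  by case: IHj => ->; [right | left].
case=> [u2 | u2]; first by apply: (mulIf u0); rewrite mul1r -expr2 u2.
have u4 : u ^+ 4 = u by rewrite (exprM u 2 2) u2 -rmorphXn u2.
by apply: cube_root1; apply: (mulIf u0); rewrite mul1r -exprSr u4.
Qed.

End FrobeniusPower.

Section MaximalSubgroupsAbelian.
Variables (gT : finGroupType) (Z : {group gT}).
Hypothesis abelZ : abelian Z.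
Local Open Scope ring_scope.
Local Open Scope group_scope.

Lemma maximal_cfker_irr (M : {group gT}) :
  maximal M Z -> exists2 i : Iirr Z, i != 0 & cfker 'chi_i = M.
Proof.
case/maxgroupP=> ltMZ maxM; have sMZ := proper_sub ltMZ.
have nsMZ : M <| Z by rewrite -sub_abelian_normal.
suff : [exists i, (i != 0) && (cfker 'chi[Z]_i == M)].
  by case/existsP=> i /andP[i0 /eqP kerM]; exists i.
apply: contraT; rewrite negb_exists => /forallP noker.
have kerZ i : M \subset cfker 'chi[Z]_i -> cfker 'chi[Z]_i = Z.
  move=> sMker; apply/eqP; apply: contraT => neqZ.
  have ltkerZ : (cfker 'chi[Z]_i)%G \proper Z by rewrite properEneq neqZ cfker_sub.
  have ker_eqM := maxM _ ltkerZ sMker.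
  have i0 : i != 0 by apply: contra_neq neqZ => ->; rewrite cfker_irr0.
  by have := noker i; rewrite i0 -ker_eqM eqxx.
have := cap_cfker_normal nsMZ.
have -> : \bigcap_(i | M \subset cfker 'chi[Z]_i) cfker 'chi[Z]_i = Z.
  apply/eqP; rewrite eqEsubset (bigcap_min 0) ?cfker_irr0 //=.
  by apply/bigcapsP => i /kerZ ->.
by move=> eqZM; rewrite eqZM properxx in ltMZ.
Qed.

Lemma card_maximal_abelian : (#|[set M : {group gT} | maximal M Z]| <= #|Z|.-1)%N.
Proof.
rewrite -(card_Iirr_abelian abelZ) -(cardsC1 (0 : Iirr Z)).
apply: leq_trans (leq_imset_card (fun i : Iirr Z => [group of cfker 'chi[Z]_i]) _).
apply/subset_leq_card/subsetP => M; rewrite inE => /maximal_cfker_irr[i i0 kerM].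
by apply/imsetP; exists i; rewrite ?inE //; apply/val_inj; rewrite /= kerM.
Qed.

End MaximalSubgroupsAbelian.

Section CommutatorSubgroups.
Variables (F : finFieldType) (th : {rmorphism F -> F}).
Local Notation gT := (Agrp th).
Local Open Scope ring_scope.

Definition cform (a c : F) := a * th c - c * th a.

Lemma cformDr a c c' : cform a (c + c') = cform a c + cform a c'.
Proof. by rewrite /cform rmorphD /=; ring. Qed.

Lemma cform_scale a t : cform a (a * t) = a * th a * (th t - t).
Proof. by rewrite /cform rmorphM /=; ring. Qed.

Lemma Amul_pair (x y : gT) : (x * y)%g = (x.1 + y.1, x.2 + y.2 + x.1 * th y.1).
Proof. by []. Qed.

Lemma Ainv_pair (x : gT) : (x^-1)%g = (- x.1, - x.2 + x.1 * th x.1).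
Proof. by []. Qed.

Lemma Aone_pair : (1 : gT)%g = (0, 0).
Proof. by []. Qed.

Lemma commgE (x g : gT) : [~ x, g]%g = (0, cform x.1 g.1).
Proof.
case: x g => [a b] [c d]; rewrite /commg /conjg !Amul_pair !Ainv_pair /cform /=.
by rewrite !rmorphD !rmorphN /=; congr (_, _); ring.
Qed.

Lemma commx_fst (x x' : gT) : x.1 = x'.1 -> commx x = commx x'.
Proof. by move=> eq_x; congr <<_>>%g; apply: eq_imset => g; rewrite !commgE eq_x. Qed.

Lemma commg_morphM (x : gT) : {in [set: gT] &, {morph commg x : g h / (g * h)%g}}.
Proof. by move=> g h _ _; rewrite !commgE !Amul_pair /= cformDr mul0r add0r addr0. Qed.

Definition commg_morphism (x : gT) := Morphism (commg_morphM x).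

Lemma commg_morphismE (x g : gT) : commg_morphism x g = [~ x, g]%g.
Proof. by []. Qed.

Lemma commx_morphim (x : gT) : commx x = (commg_morphism x @* [set: gT])%g.
Proof. by rewrite /commx -(morphimEdom (commg_morphism x)) genGid. Qed.

Canonical commx_group (x : gT) := [group of commx x].

Hypothesis th_fixed : forall t : F, th t = t -> t = 0 \/ t = 1.

Lemma cform_eq0 a c : a != 0 -> (cform a c == 0) = (c \in [set 0; a]).
Proof.
move=> a0; have -> : c = a * (c / a) by rewrite mulrC divfK.
move: (c / a) => t; rewrite cform_scale !inE !mulf_eq0 fmorph_eq0 (negbTE a0) /=.
rewrite subr_eq0 -{2}(mulr1 a) (inj_eq (mulfI a0)).
apply/eqP/orP => [/th_fixed[]->|[]/eqP->]; rewrite ?rmorph0 ?rmorph1 ?eqxx //; by [left | right].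
Qed.

Hypothesis card_gt2 : (2 < #|F|)%N.

Lemma center_Agrp : 'Z([set: gT])%g = [set y : gT | y.1 == 0].
Proof.
apply/setP => y; rewrite [in RHS]inE; apply/centerP/eqP => [[_ cy] | y0].
  apply/eqP; apply: contraT => a0.
  have /subsetPn[c _ cN] : ~~ ([set: F] \subset [set 0; y.1]).
    apply: contraL card_gt2 => /subset_leq_card; rewrite cardsT cards2 -leqNgt.
    by move/leq_trans; apply; case: (_ != _).
  have /commgP := cy ((c, 0) : gT) (in_setT _).
  by rewrite commgE Aone_pair xpair_eqE eqxx /= cform_eq0 // (negbTE cN).
split=> [|g _]; first exact: in_setT.
apply/commgP.
by rewrite commgE Aone_pair y0 /cform rmorph0 mul0r mulr0 subrr eqxx.
Qed.

Lemma notin_center (x : gT) : (x \in [set: gT] :\: 'Z([set: gT]))%g = (x.1 != 0).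
Proof. by rewrite center_Agrp !inE andbT. Qed.

Lemma card_center : #|'Z([set: gT])%g| = #|F|.
Proof.
rewrite center_Agrp; have -> : [set y : gT | y.1 == 0] = setX [set 0] [set: F].
  by apply/setP => y; rewrite !inE andbT.
by rewrite cardsX cards1 cardsT mul1n.
Qed.

Lemma commx_sub_center (x : gT) : commx x \subset 'Z([set: gT])%g.
Proof.
rewrite commx_morphim center_Agrp.
by apply/subsetP => _ /morphimP[g _ _ ->]; rewrite inE commg_morphismE commgE.
Qed.

Lemma ker_commg_morphism (x : gT) :
  x.1 != 0 -> ('ker (commg_morphism x))%g = [set g : gT | g.1 \in [set 0; x.1]].
Proof.
move=> a0; apply/setP => g.
by rewrite !inE /= commgE Aone_pair xpair_eqE eqxx /= cform_eq0 // !inE.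
Qed.

Lemma card_commx (x : gT) : x.1 != 0 -> (#|commx x| * 2)%N = #|F|.
Proof.
move=> a0; have F0 : (0 < #|F|)%N by apply/card_gt0P; exists 0.
have card_ker : #|'ker (commg_morphism x)|%g = (2 * #|F|)%N.
  rewrite ker_commg_morphism //.
  have -> : [set g : gT | g.1 \in [set 0; x.1]] = setX [set 0; x.1] [set: F].
    by apply/setP => g; rewrite !inE andbT.
  by rewrite cardsX cards2 eq_sym a0 cardsT.
have := card_morphim (commg_morphism x) [set: gT].
rewrite setIid -commx_morphim => ->.
have := Lagrange (subsetT ('ker (commg_morphism x))%g).
rewrite card_ker cardsT card_prod [(2 * _)%N]mulnC -mulnA => /eqP.
by rewrite eqn_pmul2l // mulnC => /eqP.
Qed.

Lemma index_center_commx (x : gT) : x.1 != 0 -> #|'Z([set: gT]) : commx x|%g = 2.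
Proof.
move=> a0; have := Lagrange (commx_sub_center x).
rewrite card_center -(card_commx a0) => /eqP.
by rewrite eqn_pmul2l ?cardG_gt0 // => /eqP.
Qed.

Lemma maximal_commx (x : gT) : x.1 != 0 -> maximal (commx x) 'Z([set: gT])%g.
Proof.
by move=> a0; apply: p_index_maximal (commx_sub_center x) _; rewrite index_center_commx.
Qed.

Definition range_thB : {set F} := [set th t - t | t : F].

Lemma range_thB_subr : {in range_thB &, forall p q, p - q \in range_thB}.
Proof.
move=> _ _ /imsetP[t _ ->] /imsetP[s _ ->]; apply/imsetP; exists (t - s) => //.
by rewrite rmorphB /=; ring.
Qed.

Lemma mem_commx_scale (x : gT) p :
  x.1 != 0 -> (((0, x.1 * th x.1 * p) : gT) \in commx x) = (p \in range_thB).
Proof.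
move=> a0; have N0 : x.1 * th x.1 != 0 by rewrite mulf_neq0 ?fmorph_eq0.
rewrite commx_morphim; apply/morphimP/imsetP => [[g _ _] | [t _ ->]].
  rewrite commg_morphismE commgE; have -> : g.1 = x.1 * (g.1 / x.1) by rewrite mulrC divfK.
  rewrite cform_scale => -[].
  by move/(mulfI N0) => ->; exists (g.1 / x.1).
by exists ((x.1 * t, 0) : gT) => //; rewrite commg_morphismE commgE cform_scale.
Qed.

Let x1 : gT := (1, 0).
Let x1_fst_neq0 : x1.1 != 0 := oner_neq0 F.

Lemma mem_commx1 p : (((0, p) : gT) \in commx x1) = (p \in range_thB).
Proof. by rewrite -(mem_commx_scale _ x1_fst_neq0) /= rmorph1 !mul1r. Qed.

Lemma range_thB_index2 : {in ~: range_thB &, forall y z, z - y \in range_thB}.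
Proof.
have sHZ := commx_sub_center x1; have iHZ := index_center_commx x1_fst_neq0.
have outside p : p \in ~: range_thB -> ((0, p) : gT) \in ('Z([set: gT]) :\: commx x1)%g.
  by rewrite in_setD center_Agrp !inE mem_commx1 eqxx andbT.
move=> y z /outside Zy /outside Zz.
have := rcoset_refl (commx_group x1) (0, z).
rewrite (rcoset_index2 sHZ iHZ Zz) -(rcoset_index2 sHZ iHZ Zy) mem_rcoset.
by rewrite Ainv_pair Amul_pair /= oppr0 !mul0r !addr0 mem_commx1.
Qed.

Lemma range_thB_proper : exists y, y \notin range_thB.
Proof.
have : ~~ ('Z([set: gT]) \subset commx x1)%g.
  by rewrite -indexg_eq1 index_center_commx.
case/subsetPn => -[a b]; rewrite center_Agrp inE => /eqP /= -> notH.
by exists b; rewrite -mem_commx1.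
Qed.

Hypothesis th2_fixed : forall u : F, th (th u) = u -> th u = u.

Lemma norm_inj a a' : a' != 0 -> a * th a = a' * th a' -> a = a'.
Proof.
move=> a'0 eqN; have N'0 : a' * th a' != 0 by rewrite mulf_neq0 ?fmorph_eq0.
pose u := a / a'.
have u1 : u * th u = 1 by rewrite /u rmorphM fmorphV /= mulrACA -invfM eqN divff.
have : u * th u != 0 by rewrite u1 oner_neq0.
rewrite mulf_eq0 negb_or => /andP[u0 _].
have thu : th u = u^-1 by apply: (mulfI u0); rewrite u1 mulfV.
have : th u = u by apply: th2_fixed; rewrite thu fmorphV /= thu invrK.
by case/th_fixed => [u00 | /divr1_eq //]; rewrite u00 eqxx in u0.
Qed.

Lemma commx_inj (x x' : gT) :
  x.1 != 0 -> x'.1 != 0 -> commx x = commx x' -> x.1 = x'.1.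
Proof.
move=> a0 a'0 eqH; set N := x.1 * th x.1; set N' := x'.1 * th x'.1.
have N0 : N != 0 by rewrite mulf_neq0 ?fmorph_eq0.
have N'0 : N' != 0 by rewrite mulf_neq0 ?fmorph_eq0.
apply: norm_inj => //; apply: divr1_eq.
apply: scale_stable_index2 range_thB_subr range_thB_index2 range_thB_proper _ _.
  by rewrite mulf_neq0 ?invr_eq0.
move=> p Pp; rewrite -(mem_commx_scale _ a'0) -eqH.
have -> : N' * (N / N' * p) = N * p by rewrite mulrA [N' * _]mulrC divfK.
by rewrite mem_commx_scale.
Qed.

Lemma commx_onto_maximal (M : {group gT}) :
  maximal M 'Z([set: gT])%g -> exists2 a : F, a != 0 & commx ((a, 0) : gT) = M.
Proof.
move=> maxM.
pose Ms := [set M : {group gT} | maximal M 'Z([set: gT])%g].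
pose Hs := [set commx_group ((a, 0) : gT) | a in [set~ 0]].
have sHsMs : Hs \subset Ms.
  by apply/subsetP => K /imsetP[a]; rewrite !inE => a0 ->; apply: maximal_commx.
have card_Hs : #|Hs| = #|F|.-1.
  rewrite card_in_imset ?cardsC1 // => a a'; rewrite !inE => a0 a'0 /(congr1 val).
  exact: commx_inj.
have card_Ms : (#|Ms| <= #|F|.-1)%N.
  by rewrite -card_center card_maximal_abelian ?center_abelian.
have : M \in Hs by rewrite (eqP (_ : Hs == Ms)) ?inE // eqEcard sHsMs card_Hs.
by case/imsetP => a; rewrite !inE => a0 ->; exists a.
Qed.

Lemma lcoset_center_eq (x x' : gT) :
  (x *: 'Z([set: gT]) = x' *: 'Z([set: gT]))%g <-> x.1 = x'.1.
Proof.
have memZ : (x \in x' *: 'Z([set: gT]))%g = (x.1 == x'.1).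
  by rewrite mem_lcoset center_Agrp inE Ainv_pair Amul_pair /= addrC subr_eq0.
by split=> [/lcoset_eqP | eq_x]; [rewrite memZ => /eqP | apply/lcoset_eqP; rewrite memZ eq_x].
Qed.

End CommutatorSubgroups.

Theorem lemma3p1 (F : finFieldType) (n : nat) (th : {rmorphism F -> F}) :
  odd n -> 3 <= n -> #|F| = 2 ^ n -> gal_generator th ->
  [/\ (forall x : Agrp th, x \in [set: Agrp th] :\: 'Z([set: Agrp th]) ->
         maximal (commx x) 'Z([set: Agrp th])
         /\ #|'Z([set: Agrp th]) : commx x| = 2),
      (forall M : {group Agrp th}, maximal M 'Z([set: Agrp th]) ->
         exists2 x : Agrp th, x \in [set: Agrp th] :\: 'Z([set: Agrp th])
                   & commx x = M)
    & (forall x x' : Agrp th,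
         x \in [set: Agrp th] :\: 'Z([set: Agrp th]) ->
         x' \in [set: Agrp th] :\: 'Z([set: Agrp th]) ->
         (commx x = commx x' <-> x *: 'Z([set: Agrp th]) = x' *: 'Z([set: Agrp th])))]%g.
Proof.
move=> odd_n n_ge3 cardF gen_th.
have [k frobE] := gen_th (pFrobenius_aut (card_finPcharP cardF (isT : prime 2))).
have sqr_iter t : (t ^+ 2)%R = iter k th t by rewrite -frobE.
have cardF_mod3 : #|F| = 2 %[mod 3] by rewrite cardF expn2_odd_mod3.
have cube1 u : (u ^+ 3 = 1 -> u = 1)%R := cube_root1_eq1 cardF_mod3.
have th_fixed := fixed_th_01 sqr_iter.
have th2_fixed := fixed_th2 sqr_iter cube1.
have card_gt2 : 2 < #|F|.
  by rewrite cardF -[X in X < _]expn1 ltn_exp2l // (leq_trans _ n_ge3).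
split.
- move=> x; rewrite notin_center // => a0.
  by rewrite maximal_commx ?index_center_commx.
- move=> M /(commx_onto_maximal th_fixed card_gt2 th2_fixed) [a a0 <-].
  by exists (a, 0%R); rewrite ?notin_center.
- move=> x x'; rewrite !notin_center // => a0 a'0.
  rewrite lcoset_center_eq //; split=> [|/commx_fst //].
  exact: commx_inj.
Qed.
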